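(* Let $H$ be a propositional formula in conjunctive normal form (a finite set of clauses) over the finite set of variables $\mathrm{Vars}(H)$. Then $H$ is unsatisfiable if and only if $H$ has a Stable Set of Assignments (SSA), i.e., there exist a set $P$ of (full) assignments to $\mathrm{Vars}(H)$, an assignment $\vec{p}_{init} \in P$, and an AC-mapping $\Phi: P \to H$ such that for every $\vec{p} \in P$, $\mathrm{Nbhd}(\vec{p}_{init},\vec{p},\Phi(\vec{p})) \subseteq P$.
   Context: A clause is a disjunction of literals; a CNF formula $H$ is identified with its set of clauses $\{C_1,\dots,C_k\}$ and $\mathrm{Vars}(H)$ denotes its set of variables. Assignments are full assignments to $\mathrm{Vars}(H)$. For an assignment $\vec{p}$ falsifying a clause $C$, $\mathrm{Nbhd}(\vec{p},C)$ is the set of assignments that satisfy $C$ and are at Hamming distance 1 from $\vec{p}$ (equivalently, obtained from $\vec{p}$ by flipping the value of one variable of $C$). For another assignment $\vec{q}$, $\mathrm{Nbhd}(\vec{q},\vec{p},C)$ is the subset of $\mathrm{Nbhd}(\vec{p},C)$ consisting of those assignments whose Hamming distance to $\vec{q}$ is strictly greater than that of $\vec{p}$. An AC-mapping for a set $P$ of assignments each of which falsifies $H$ is a map $\Phi$ assigning to each $\vec{p}\in P$ a clause $\Phi(\vec{p})$ of $H$ falsified by $\vec{p}$ (so in particular every assignment in an SSA falsifies $H$). The assignment $\vec{p}_{init}$ is called the center of the SSA. *)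

From mathcomp Require Import all_boot.
Set Implicit Arguments. Unset Strict Implicit. Unset Printing Implicit Defensive.

Section CNF.
Variable V : finType.

(* A literal is a pair (variable, polarity): (v, true) is v, (v, false) is ~v. *)
Definition lit := (V * bool)%type.
Definition clause := {set lit}.
Definition cnf := {set clause}.
Definition assignment := {ffun V -> bool}.

Definition lit_sat (p : assignment) (l : lit) : bool := p l.1 == l.2.
Definition clause_sat (p : assignment) (C : clause) : bool :=
  [exists l in C, lit_sat p l].
Definition cnf_sat (p : assignment) (H : cnf) : bool :=
  [forall C in H, clause_sat p C].
Definition satisfiable (H : cnf) : Prop := exists p, cnf_sat p H.

Definition Vars (H : cnf) : {set V} :=
  [set v | [exists C in H, [exists b, (v, b) \in C]]].

Definition hamming (p q : assignment) : nat := #|[set v | p v != q v]|.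

Definition Nbhd (p : assignment) (C : clause) : {set assignment} :=
  [set q | clause_sat q C & hamming p q == 1].

(* Nbhd(q, p, C): those elements of Nbhd(p, C) strictly farther from q than p. *)
Definition Nbhd_from (q p : assignment) (C : clause) : {set assignment} :=
  [set r in Nbhd p C | hamming q p < hamming q r].

Definition is_SSA (H : cnf) (P : {set assignment}) (pinit : assignment)
    (Phi : assignment -> clause) : Prop :=
  [/\ pinit \in P,
      (forall p, p \in P -> Phi p \in H /\ ~~ clause_sat p (Phi p)) &
      (forall p, p \in P -> Nbhd_from pinit p (Phi p) \subset P)].

End CNF.

(* If H is unsatisfiable, every assignment falsifies some clause, and the set
   of all assignments is stable.  Conversely, suppose s satisfies H and
   consider the members p of an SSA lying between the center and s, i.e.
   disagreeing with s only where the center does.  The clause Phi p is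
   satisfied by s but not by p, so it has a variable on which p and s differ;
   there p still agrees with the center, hence flipping it moves away from the
   center and lands back in P, between the center and s, and strictly closer
   to s.  A member of this kind closest to s therefore cannot exist. *)

From mathcomp Require Import all_boot.

Set Implicit Arguments.
Unset Strict Implicit.
Unset Printing Implicit Defensive.

Section Flip.
Variable V : finType.
Implicit Types (p q s : assignment V) (C : clause V) (v : V).

Definition flip p v : assignment V := [ffun w => if w == v then ~~ p v else p w].

Lemma hamming_flip p v : hamming p (flip p v) = 1.
Proof.
rewrite /hamming -(cards1 v); apply: eq_card => w.
rewrite !inE ffunE; case: (w =P v) => [->|_]; first by case: (p v).
by rewrite eqxx.
Qed.

Lemma hamming_flip_away q p v :
  p v = q v -> hamming q (flip p v) = (hamming q p).+1.
Proof.
move=> pq; rewrite /hamming.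
have -> : [set w | q w != flip p v w] = v |: [set w | q w != p w].
  apply/setP=> w; rewrite !inE ffunE; case: (w =P v) => [->|_] //=.
  by rewrite -pq; case: (p v).
by rewrite cardsU1 inE pq eqxx.
Qed.

Lemma hamming_flip_toward s p v :
  p v != s v -> hamming (flip p v) s < hamming p s.
Proof.
move=> ps; rewrite /hamming (cardsD1 v [set w | p w != s w]) inE ps add1n ltnS.
apply: subset_leq_card; apply/subsetP=> w; rewrite !inE ffunE.
case: (w =P v) => [->|_] //=.
by move: ps; case: (p v); case: (s v).
Qed.

Lemma clause_sat_flip_diff s p C :
  clause_sat s C -> ~~ clause_sat p C ->
  exists2 v, p v != s v & clause_sat (flip p v) C.
Proof.
case/existsP=> [[v b]] /andP[vbC]; rewrite /lit_sat /= => /eqP sv pC.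
have ps : p v != s v.
  apply: contra pC => /eqP ps; apply/existsP; exists (v, b).
  by rewrite vbC /lit_sat /= ps sv.
exists v => //; apply/existsP; exists (v, b).
by rewrite vbC /lit_sat /= ffunE eqxx -sv; move: ps; case: (p v); case: (s v).
Qed.

Definition between q s p := [forall w, (q w == s w) ==> (p w == s w)].

Lemma between_refl q s : between q s q.
Proof. by apply/forallP=> w; apply/implyP. Qed.

Lemma between_diff q s p v : between q s p -> p v != s v -> p v = q v.
Proof.
move/forallP/(_ v); case: (q v =P s v) => [-> /eqP -> | qs _ ps].
  by rewrite eqxx.
by move: ps qs; case: (p v); case: (s v); case: (q v).
Qed.

Lemma between_flip q s p v :
  between q s p -> p v != s v -> between q s (flip p v).
Proof.
move=> bp ps; apply/forallP=> w; apply/implyP=> qs; rewrite ffunE.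
case: (w =P v) => [wv|_]; last by move/forallP: bp => /(_ w); rewrite qs.
by move: qs; rewrite wv -(between_diff bp ps) (negbTE ps).
Qed.

End Flip.

Section FalsifiedClause.
Variables (V : finType) (H : cnf V).

Definition falsified_clause (p : assignment V) : clause V :=
  odflt set0 [pick C in H | ~~ clause_sat p C].

Lemma falsified_clauseP p :
  ~~ cnf_sat p H -> falsified_clause p \in H /\ ~~ clause_sat p (falsified_clause p).
Proof.
move=> pH; rewrite /falsified_clause; case: pickP => [C /andP[] // | none].
case/negP: pH; apply/forallP=> C; apply/implyP=> CH.
by move: (none C); rewrite CH => /negbFE.
Qed.

Lemma unsat_SSA : ~ satisfiable H ->
  is_SSA H [set: assignment V] [ffun=> true] falsified_clause.
Proof.
move=> unsat; split; first by rewrite inE.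
- by move=> p _; apply: falsified_clauseP; apply/negP=> pH; apply: unsat; exists p.
- by move=> p _; apply: subsetT.
Qed.

End FalsifiedClause.

Section StableSet.
Variables (V : finType) (H : cnf V) (P : {set assignment V}).
Variables (pinit : assignment V) (Phi : assignment V -> clause V).
Hypothesis SSA_P : is_SSA H P pinit Phi.

Lemma SSA_step s p : cnf_sat s H -> p \in P -> between pinit s p ->
  exists2 r, (r \in P) && between pinit s r & hamming r s < hamming p s.
Proof.
case: SSA_P => _ Phi_falsified Phi_stable sH pP bp.
have [PhiH pPhi] := Phi_falsified p pP.
have sPhi : clause_sat s (Phi p) by move/forallP/(_ (Phi p)): sH; rewrite PhiH.
have [v ps flipPhi] := clause_sat_flip_diff sPhi pPhi.
have flip_nbhd : flip p v \in Nbhd_from pinit p (Phi p).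
  by rewrite !inE flipPhi hamming_flip (hamming_flip_away (between_diff bp ps)) ltnSn.
exists (flip p v); last exact: hamming_flip_toward.
by rewrite (subsetP (Phi_stable p pP)) // between_flip.
Qed.

Lemma SSA_unsat : ~ satisfiable H.
Proof.
case=> s sH; have [pinitP _ _] := SSA_P.
pose between_in_P p := (p \in P) && between pinit s p.
have pinit_between : between_in_P pinit by rewrite /between_in_P pinitP between_refl.
case: (arg_minnP (fun p => hamming p s) pinit_between) => p /andP[pP bp] p_min.
have [r rP] := SSA_step sH pP bp.
by rewrite ltnNge p_min.
Qed.

End StableSet.

Theorem proposition1 (V : finType) (H : cnf V) :
  Vars H = [set: V] ->
  (~ satisfiable H <->
   exists (P : {set assignment V}) (pinit : assignment V)
          (Phi : assignment V -> clause V), is_SSA H P pinit Phi).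
Proof.
move=> _; split.
- by move=> unsat; do 3 eexists; exact: unsat_SSA.
- by case=> P [pinit [Phi]]; apply: SSA_unsat.
Qed.
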